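(* Let $P$ be a continuous $L$-ordered set. Then $({\rm pt}_L\sigma_L(P),{\rm sub}_{\sigma_L(P)})$, together with the map $\eta_P:P\to{\rm pt}_L\sigma_L(P)$, $x\mapsto[x]$, is a directed completion of $P$.
   Context: $L$ is a frame with implication $\to$. $L$-subsets of $X$ are maps $X\to L$; nonempty means $\bigvee_xA(x)=1$; ${\rm sub}_X(A,B)=\bigwedge_xA(x)\to B(x)$; $f^\rightarrow(A)(y)=\bigvee_{f(x)=y}A(x)$. An $L$-order on $P$: $e:P\times P\to L$ with $e(x,x)=1$, $e(x,y)\wedge e(y,z)\le e(x,z)$, $e(x,y)\wedge e(y,x)=1\Rightarrow x=y$. ${\downarrow}y(x)=e(x,y)$. $x=\sqcup A$ if $e(x,y)={\rm sub}_P(A,{\downarrow}y)$ for all $y$. Directed: nonempty and $D(x)\wedge D(y)\le\bigvee_zD(z)\wedge e(x,z)\wedge e(y,z)$; ideal = directed lower set. $L$-dcpo: every directed $L$-subset has a supremum. Scott continuous $f$: for each directed $D$ with a supremum, $f^\rightarrow(D)$ has a supremum equal to $f(\sqcup D)$. ${\Downarrow}x(y)=\bigwedge\{e(x,\sqcup I)\to I(y): I\text{ ideal with a supremum}\}$; $P$ is a continuous $L$-ordered set if each ${\Downarrow}x$ is directed with supremum $x$; a continuous $L$-dcpo is a continuous $L$-ordered set that is an $L$-dcpo. $\sigma_L(P)$ (Scott $L$-topology) is the set of $A\in L^P$ that are upper sets ($A(x)\wedge e(x,y)\le A(y)$) with $A(\sqcup D)=\bigvee_xA(x)\wedge D(x)$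 for every directed $D$ having a supremum. ${\rm pt}_L\sigma_L(P)$ is the set of maps $p:\sigma_L(P)\to L$ preserving binary meets and arbitrary joins and with $p(\lambda_P)=\lambda$ for every constant $\lambda_P$; it is $L$-ordered by ${\rm sub}_{\sigma_L(P)}(p,q)=\bigwedge_{A\in\sigma_L(P)}p(A)\to q(A)$. $[x](A)=A(x)$. A directed completion of a continuous $L$-ordered set $P$ is a continuous $L$-dcpo $Q$ with a Scott continuous $j:P\to Q$ such that for every continuous $L$-dcpo $M$ and Scott continuous $f:P\to M$ there is a unique Scott continuous $\bar f:Q\to M$ with $\bar f\circ j=f$. *)

Set Implicit Arguments.
Unset Strict Implicit.

Record frame := Frame {
  car :> Type;
  fle : car -> car -> Prop;
  fle_refl : forall a, fle a a;
  fle_trans : forall a b c, fle a b -> fle b c -> fle a c;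
  fle_antisym : forall a b, fle a b -> fle b a -> a = b;
  fsup : (car -> Prop) -> car;
  fsup_ub : forall (S : car -> Prop) a, S a -> fle a (fsup S);
  fsup_least : forall (S : car -> Prop) b, (forall a, S a -> fle a b) -> fle (fsup S) b;
  fmeet : car -> car -> car;
  fmeet_l : forall a b, fle (fmeet a b) a;
  fmeet_r : forall a b, fle (fmeet a b) b;
  fmeet_glb : forall a b c, fle c a -> fle c b -> fle c (fmeet a b);
  fdistr : forall a (S : car -> Prop),
      fmeet a (fsup S) = fsup (fun c => exists s, S s /\ c = fmeet a s)
}.
Arguments fle {f}. Arguments fsup {f}. Arguments fmeet {f}.

Section FrameOps.
Variable L : frame.
Definition ftop : L := fsup (fun _ => True).
Definition Join (X : Type) (f : X -> L) : L := fsup (fun l => exists x, l = f x).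
Definition Meet (X : Type) (f : X -> L) : L := fsup (fun l => forall x, fle l (f x)).
Definition fimp (a b : L) : L := fsup (fun c => fle (fmeet c a) b).
End FrameOps.
Arguments ftop {L}.

Section LOrder.
Variable L : frame.

Definition Lnonempty (X : Type) (A : X -> L) : Prop := Join A = ftop.
Definition Lsub (X : Type) (A B : X -> L) : L := Meet (fun x => fimp (A x) (B x)).
Definition Limage (X Y : Type) (f : X -> Y) (A : X -> L) : Y -> L :=
  fun y => fsup (fun l => exists x, f x = y /\ l = A x).

Definition is_Lorder (P : Type) (e : P -> P -> L) : Prop :=
  (forall x, e x x = ftop) /\
  (forall x y z, fle (fmeet (e x y) (e y z)) (e x z)) /\
  (forall x y, fmeet (e x y) (e y x) = ftop -> x = y).

Variables (P : Type) (e : P -> P -> L).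

Definition down (y : P) : P -> L := fun x => e x y.
Definition is_Lsup (A : P -> L) (x : P) : Prop := forall y, e x y = Lsub A (down y).
Definition Ldirected (D : P -> L) : Prop :=
  Lnonempty D /\
  forall x y, fle (fmeet (D x) (D y))
                  (Join (fun z => fmeet (fmeet (D z) (e x z)) (e y z))).
Definition Llower (A : P -> L) : Prop := forall x y, fle (fmeet (A y) (e x y)) (A x).
Definition Lupper (A : P -> L) : Prop := forall x y, fle (fmeet (A x) (e x y)) (A y).
Definition Lideal (I : P -> L) : Prop := Ldirected I /\ Llower I.
Definition Ldcpo : Prop :=
  is_Lorder e /\ forall D, Ldirected D -> exists x, is_Lsup D x.

Definition waybelow (x : P) : P -> L := fun y =>
  fsup (fun l => forall (I : P -> L) (s : P), Lideal I -> is_Lsup I s ->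
                   fle l (fimp (e x s) (I y))).

Definition continuous_Lordered : Prop :=
  is_Lorder e /\ forall x, Ldirected (waybelow x) /\ is_Lsup (waybelow x) x.
Definition continuous_Ldcpo : Prop := continuous_Lordered /\ Ldcpo.

Definition scott_open (A : P -> L) : Prop :=
  Lupper A /\
  forall D s, Ldirected D -> is_Lsup D s ->
    A s = Join (fun x => fmeet (A x) (D x)).

Definition Opens := { A : P -> L | scott_open A }.

(* points: maps sigma_L(P) -> L preserving binary meets, arbitrary joins
   and constants (meets/joins in sigma_L(P) are computed pointwise) *)
Definition is_Lpoint (p : Opens -> L) : Prop :=
  (forall U V W : Opens,
      proj1_sig W = (fun x => fmeet (proj1_sig U x) (proj1_sig V x)) ->
      p W = fmeet (p U) (p V)) /\
  (forall (S : Opens -> Prop) (W : Opens),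
      proj1_sig W = (fun x => fsup (fun l => exists U, S U /\ l = proj1_sig U x)) ->
      p W = fsup (fun l => exists U, S U /\ l = p U)) /\
  (forall (lam : L) (W : Opens), proj1_sig W = (fun _ => lam) -> p W = lam).

Definition ptL := { p : Opens -> L | is_Lpoint p }.

Definition sub_pt (p q : ptL) : L := Lsub (proj1_sig p) (proj1_sig q).

Definition evalpt (x : P) : Opens -> L := fun U => proj1_sig U x.

Lemma evalpt_point (x : P) : is_Lpoint (evalpt x).
Proof.
  unfold is_Lpoint, evalpt; split; [|split].
  - intros U V W H; rewrite H; reflexivity.
  - intros S W H; rewrite H; reflexivity.
  - intros lam W H; rewrite H; reflexivity.
Qed.

Definition eta (x : P) : ptL := exist _ (evalpt x) (evalpt_point x).
End LOrder.

Definition scott_continuous (L : frame) (P Q : Type) (eP : P -> P -> L) (eQ : Q -> Q -> L)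
  (f : P -> Q) : Prop :=
  forall D x, Ldirected eP D -> is_Lsup eP D x -> is_Lsup eQ (Limage f D) (f x).

Definition directed_completion (L : frame) (P Q : Type) (eP : P -> P -> L)
  (eQ : Q -> Q -> L) (j : P -> Q) : Prop :=
  continuous_Ldcpo eQ /\ scott_continuous eP eQ j /\
  forall (M : Type) (eM : M -> M -> L), continuous_Ldcpo eM ->
    forall f : P -> M, scott_continuous eP eM f ->
      exists! fbar : Q -> M, scott_continuous eQ eM fbar /\ (forall x, fbar (j x) = f x).

From Stdlib Require Import FunctionalExtensionality ProofIrrelevance ClassicalEpsilon.

(* Points of the Scott L-topology, ordered by [sub_pt], form an L-dcpo: a directed family [D]
   of points has the pointwise supremum [A ↦ ⋁_q D q ⊓ q A].  When [P] is continuous, each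
   [⇑y = ⇓(-)(y)] is Scott open (by interpolation) and every Scott open [A] satisfies
   [A x = ⋁_y A y ⊓ ⇓x(y)]; as points preserve such joins, every point [p] is the supremum
   of the ideal [q ↦ ⋁_y p(⇑y) ⊓ sub(q, [y])], which is exactly its way-below set.  A Scott
   continuous [f : P → M] extends to [p ↦ ⊔ f→(y ↦ p(⇑y))], and any Scott continuous
   extension [g] must agree with it, since [g p] is the supremum of [g] over that ideal. *)

Set Implicit Arguments.

Local Infix "⊑" := fle (at level 70).
Local Infix "⊓" := fmeet (at level 40, left associativity).
Local Notation val x := (proj1_sig x).

(* Proves [a1 ⊓ ... ⊓ an ⊑ b1 ⊓ ... ⊓ bm] when each [bj] is some [ai] or [ftop]. *)
Ltac lattice := first [ assumption | apply fle_refl | (apply fsup_ub; exact I)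
  | (apply fmeet_glb; lattice)
  | (eapply fle_trans; [apply fmeet_l|]; lattice)
  | (eapply fle_trans; [apply fmeet_r|]; lattice) ].

Section FrameFacts.
Context {L : frame}.
Implicit Types a b c : L.

Lemma fle_top a : a ⊑ ftop.
Proof. lattice. Qed.

Lemma top_le_eq a : ftop ⊑ a -> a = ftop.
Proof. now intro H; apply fle_antisym; [apply fle_top|]. Qed.

Lemma meet_mono a a' b b' : a ⊑ a' -> b ⊑ b' -> a ⊓ b ⊑ a' ⊓ b'.
Proof.
  now intros Ha Hb; apply fmeet_glb; eapply fle_trans; [apply fmeet_l | | apply fmeet_r |].
Qed.

Lemma fmeetC a b : a ⊓ b = b ⊓ a.
Proof. apply fle_antisym; lattice. Qed.

Lemma fmeet_topr a : a ⊓ ftop = a.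
Proof. apply fle_antisym; lattice. Qed.

Lemma fmeet_topl a : ftop ⊓ a = a.
Proof. apply fle_antisym; lattice. Qed.

Lemma Join_ub (X : Type) (f : X -> L) x : f x ⊑ Join f.
Proof. now apply fsup_ub; exists x. Qed.

Lemma le_Join (X : Type) (f : X -> L) x a : a ⊑ f x -> a ⊑ Join f.
Proof. now intro H; eapply fle_trans; [exact H | apply Join_ub]. Qed.

Lemma Join_least (X : Type) (f : X -> L) b : (forall x, f x ⊑ b) -> Join f ⊑ b.
Proof. now intro H; apply fsup_least; intros a [x ->]. Qed.

Lemma Meet_glb (X : Type) (f : X -> L) c : (forall x, c ⊑ f x) -> c ⊑ Meet f.
Proof. now intro H; apply fsup_ub. Qed.

Lemma Meet_lb (X : Type) (f : X -> L) x : Meet f ⊑ f x.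
Proof. now apply fsup_least; intros a Ha. Qed.

Lemma fsup_meet_l (S : L -> Prop) a b : (forall s, S s -> a ⊓ s ⊑ b) -> a ⊓ fsup S ⊑ b.
Proof. now intro H; rewrite fdistr; apply fsup_least; intros c [s [Hs ->]]; apply H. Qed.

Lemma fsup_meet_r (S : L -> Prop) a b : (forall s, S s -> s ⊓ a ⊑ b) -> fsup S ⊓ a ⊑ b.
Proof. now intro H; rewrite fmeetC; apply fsup_meet_l; intros; rewrite fmeetC; apply H. Qed.

Lemma Join_meet_l (X : Type) (f : X -> L) a b : (forall x, a ⊓ f x ⊑ b) -> a ⊓ Join f ⊑ b.
Proof. now intro H; apply fsup_meet_l; intros s [x ->]. Qed.

Lemma Join_meet_r (X : Type) (f : X -> L) a b : (forall x, f x ⊓ a ⊑ b) -> Join f ⊓ a ⊑ b.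
Proof. now intro H; apply fsup_meet_r; intros s [x ->]. Qed.

Lemma meet_le_Join_l {X : Type} {f : X -> L} {a c b} :
  a ⊑ Join f -> (forall x, f x ⊓ c ⊑ b) -> a ⊓ c ⊑ b.
Proof.
  intros Ha H; eapply fle_trans; [apply meet_mono; [exact Ha | apply fle_refl] |].
  now apply Join_meet_r.
Qed.

Lemma meet_le_Join_r {X : Type} {f : X -> L} {a c b} :
  c ⊑ Join f -> (forall x, a ⊓ f x ⊑ b) -> a ⊓ c ⊑ b.
Proof.
  intros Hc H; eapply fle_trans; [apply meet_mono; [apply fle_refl | exact Hc] |].
  now apply Join_meet_l.
Qed.

Lemma imp_intro a b c : c ⊓ a ⊑ b -> c ⊑ fimp a b.
Proof. now intro H; apply fsup_ub. Qed.

Lemma imp_mp a b c : c ⊑ fimp a b -> c ⊑ a -> c ⊑ b.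
Proof.
  intros Hi Ha; eapply fle_trans; [apply (fmeet_glb Hi Ha) |].
  now apply fsup_meet_r.
Qed.

Lemma imp_elim a b c : c ⊑ fimp a b -> c ⊓ a ⊑ b.
Proof. now intro H; apply (imp_mp a); lattice. Qed.

Lemma Lsub_intro (X : Type) (A B : X -> L) c : (forall x, c ⊓ A x ⊑ B x) -> c ⊑ Lsub A B.
Proof. now intro H; apply Meet_glb; intro x; apply imp_intro. Qed.

Lemma Lsub_mp (X : Type) (A B : X -> L) c x : c ⊑ Lsub A B -> c ⊑ A x -> c ⊑ B x.
Proof.
  intros Hs; apply imp_mp; eapply fle_trans; [exact Hs |].
  exact (Meet_lb (fun x => fimp (A x) (B x)) x).
Qed.

Lemma Lsub_elim (X : Type) (A B : X -> L) x : Lsub A B ⊓ A x ⊑ B x.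
Proof. now apply (Lsub_mp A); lattice. Qed.

Lemma Lsub_Limage (X Y : Type) (f : X -> Y) (D : X -> L) (B : Y -> L) :
  Lsub (Limage f D) B = Lsub D (fun x => B (f x)).
Proof.
  apply fle_antisym; apply Lsub_intro.
  - intro x; apply (Lsub_mp (Limage f D)); [lattice |].
    now eapply fle_trans; [apply fmeet_r | apply fsup_ub; exists x].
  - now intro y; apply fsup_meet_l; intros s [x [<- ->]]; apply (Lsub_elim D).
Qed.

End FrameFacts.

Section LOrderFacts.
Context {L : frame} {X : Type} (e : X -> X -> L) (He : is_Lorder e).

Lemma Lrefl x : e x x = ftop.
Proof. apply He. Qed.

Lemma Ltrans {c x z} y : c ⊑ e x y -> c ⊑ e y z -> c ⊑ e x z.
Proof.
  intros H1 H2; eapply fle_trans; [exact (fmeet_glb H1 H2) | apply (proj1 (proj2 He))].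
Qed.

Lemma Lsup_ub D s x : is_Lsup e D s -> D x ⊑ e x s.
Proof.
  intro Hs; apply (Lsub_mp D (down e s)); [| apply fle_refl].
  now rewrite <- Hs, Lrefl; apply fle_top.
Qed.

Lemma Lsup_least D s y c : is_Lsup e D s -> (forall x, c ⊓ D x ⊑ e x y) -> c ⊑ e s y.
Proof. now intros Hs H; rewrite (Hs y); apply Lsub_intro. Qed.

Lemma Lsup_unique D s t : is_Lsup e D s -> is_Lsup e D t -> s = t.
Proof.
  intros Hs Ht; apply He, top_le_eq, fmeet_glb.
  - now apply (Lsup_least t _ Hs); intro x; eapply fle_trans; [apply fmeet_r | apply Lsup_ub].
  - now apply (Lsup_least s _ Ht); intro x; eapply fle_trans; [apply fmeet_r | apply Lsup_ub].
Qed.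

Lemma down_Lsup x : is_Lsup e (down e x) x.
Proof.
  intro y; apply fle_antisym.
  - now apply Lsub_intro; intro z; apply (Ltrans x); lattice.
  - apply (Lsub_mp (down e x) (down e y) _ x); [apply fle_refl |].
    now unfold down; rewrite Lrefl; apply fle_top.
Qed.

Lemma down_ideal x : Lideal e (down e x).
Proof.
  split; [split |].
  - now apply top_le_eq; apply (le_Join _ x); unfold down; rewrite Lrefl; apply fle_refl.
  - now intros a b; apply (le_Join _ x); unfold down; rewrite Lrefl; lattice.
  - now intros a b; apply (Ltrans b); lattice.
Qed.

End LOrderFacts.

Lemma scott_continuous_mono {L : frame} (P M : Type) (eP : P -> P -> L) (eM : M -> M -> L) f :
  is_Lorder eP -> is_Lorder eM -> scott_continuous eP eM f ->
  forall x y, eP x y ⊑ eM (f x) (f y).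
Proof.
  intros HP HM Hf x y.
  pose proof (Hf _ _ (proj1 (down_ideal HP y)) (down_Lsup HP y)) as Himg.
  eapply fle_trans; [| apply (Lsup_ub HM _ Himg)].
  now apply fsup_ub; exists x.
Qed.

Section ScottOpens.
Context {L : frame} {P : Type} (e : P -> P -> L).

Lemma open_upper (U : Opens e) x y : val U x ⊓ e x y ⊑ val U y.
Proof. apply (proj1 (proj2_sig U)). Qed.

Lemma open_Lsup (U : Opens e) D s : Ldirected e D -> is_Lsup e D s ->
  val U s = Join (fun x => val U x ⊓ D x).
Proof. apply (proj2 (proj2_sig U)). Qed.

Lemma scott_open_meet (U V : Opens e) : scott_open e (fun x => val U x ⊓ val V x).
Proof.
  split.
  - intros x y; apply fmeet_glb.
    + eapply fle_trans; [| apply (open_upper U x y)]; lattice.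
    + eapply fle_trans; [| apply (open_upper V x y)]; lattice.
  - intros D s HD Hs; rewrite (open_Lsup U HD Hs), (open_Lsup V HD Hs).
    apply fle_antisym.
    + apply Join_meet_r; intro x; apply Join_meet_l; intro x'.
      apply (fle_trans (b := (D x ⊓ D x') ⊓ (val U x ⊓ val V x'))); [lattice |].
      apply (meet_le_Join_l (proj2 HD x x')); intro z.
      apply (le_Join _ z); apply fmeet_glb; [apply fmeet_glb | lattice].
      * eapply fle_trans; [| apply (open_upper U x z)]; lattice.
      * eapply fle_trans; [| apply (open_upper V x' z)]; lattice.
    + now apply Join_least; intro x; apply fmeet_glb; apply (le_Join _ x); lattice.
Qed.

Lemma scott_open_const (c : L) : scott_open e (fun _ => c).
Proof.
  split.
  - intros x y; apply fmeet_l.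
  - intros D s [Dne _] Hs; apply fle_antisym.
    + rewrite <- (fmeet_topr c) at 1; rewrite <- Dne.
      now apply Join_meet_l; intro x; apply (le_Join _ x); apply fle_refl.
    + now apply Join_least; intro x; apply fmeet_l.
Qed.

Lemma scott_open_Join (I : Type) (F : I -> Opens e) :
  scott_open e (fun x => Join (fun i => val (F i) x)).
Proof.
  split.
  - intros x y; apply Join_meet_r; intro i; apply (le_Join _ i); apply open_upper.
  - intros D s HD Hs; apply fle_antisym.
    + apply Join_least; intro i; rewrite (open_Lsup (F i) HD Hs).
      apply Join_least; intro x; apply (le_Join _ x); apply meet_mono; [| apply fle_refl].
      exact (Join_ub (fun i => val (F i) x) i).
    + apply Join_least; intro x; apply Join_meet_r; intro i; apply (le_Join _ i).
      rewrite (open_Lsup (F i) HD Hs); exact (Join_ub (fun x => val (F i) x ⊓ D x) x).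
Qed.

Definition open_meet (U V : Opens e) : Opens e := exist _ _ (scott_open_meet U V).
Definition open_const (c : L) : Opens e := exist _ _ (scott_open_const c).
Definition open_Join (I : Type) (F : I -> Opens e) : Opens e := exist _ _ (scott_open_Join F).

Lemma pt_meet (p : ptL e) U V : val p (open_meet U V) = val p U ⊓ val p V.
Proof. now apply (proj1 (proj2_sig p)). Qed.

Lemma pt_const (p : ptL e) c : val p (open_const c) = c.
Proof. now apply (proj2 (proj2 (proj2_sig p))). Qed.

Lemma pt_Join (p : ptL e) (I : Type) (F : I -> Opens e) :
  val p (open_Join F) = Join (fun i => val p (F i)).
Proof.
  assert (Hfam : forall (g : Opens e -> L),
    Join (fun i => g (F i)) = fsup (fun l => exists U, (exists i, U = F i) /\ l = g U)).
  { intro g; apply fle_antisym.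
    - now apply Join_least; intro i; apply fsup_ub; exists (F i); split; [exists i |].
    - apply fsup_least; intros l [U [[i ->] ->]]; apply (Join_ub (fun i => g (F i)) i). }
  rewrite (Hfam (val p)); apply (proj1 (proj2 (proj2_sig p))); simpl.
  now apply functional_extensionality; intro x; rewrite (Hfam (fun U => val U x)).
Qed.

Lemma pt_mono (p : ptL e) (U V : Opens e) :
  (forall x, val U x ⊑ val V x) -> val p U ⊑ val p V.
Proof.
  intro H; rewrite (proj1 (proj2_sig p) U V U); [apply fmeet_r |].
  apply functional_extensionality; intro x; apply fle_antisym; [| apply fmeet_l].
  apply fmeet_glb; [apply fle_refl | apply H].
Qed.

(* The right-hand side is computed termwise on the open [⋁_i (F i ⊓ const (c i))]. *)
Lemma pt_le_Join_weighted (p : ptL e) (A : Opens e) (I : Type) (F : I -> Opens e) (c : I -> L) :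
  (forall x, val A x ⊑ Join (fun i => val (F i) x ⊓ c i)) ->
  val p A ⊑ Join (fun i => val p (F i) ⊓ c i).
Proof.
  intro HA.
  apply (fle_trans (b := val p (open_Join (fun i => open_meet (F i) (open_const (c i)))))).
  - now apply pt_mono.
  - rewrite pt_Join; apply Join_least; intro i; apply (le_Join _ i).
    now rewrite pt_meet, pt_const; apply fle_refl.
Qed.

End ScottOpens.

Section PointsDcpo.
Context {L : frame} {P : Type} (e : P -> P -> L).
Local Notation E := (@sub_pt L P e).

Lemma sub_pt_elim (p q : ptL e) A : E p q ⊓ val p A ⊑ val q A.
Proof. apply Lsub_elim. Qed.

Lemma sub_pt_Lorder : is_Lorder E.
Proof.
  split; [| split].
  - now intro p; apply top_le_eq, Lsub_intro; intro A; apply fmeet_r.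
  - intros p q r; apply Lsub_intro; intro A.
    eapply fle_trans; [| apply (sub_pt_elim q r)]; apply fmeet_glb; [lattice |].
    eapply fle_trans; [| apply (sub_pt_elim p q)]; lattice.
  - intros [p Hp] [q Hq] Hpq.
    assert (p = q) as ->; [| now f_equal; apply proof_irrelevance].
    apply functional_extensionality; intro A; apply fle_antisym.
    + apply (Lsub_mp p q _ A); [| apply fle_refl].
      now eapply fle_trans; [apply fle_top | rewrite <- Hpq; apply fmeet_l].
    + apply (Lsub_mp q p _ A); [| apply fle_refl].
      now eapply fle_trans; [apply fle_top | rewrite <- Hpq; apply fmeet_r].
Qed.

Definition pt_sup (D : ptL e -> L) (A : Opens e) : L := Join (fun q => D q ⊓ val q A).

Lemma pt_sup_point D : Ldirected E D -> is_Lpoint (pt_sup D).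
Proof.
  intros [Dne Ddir]; unfold pt_sup; split; [| split].
  - intros U V W HW.
    assert (Hq : forall q : ptL e, val q W = val q U ⊓ val q V)
      by (intro q; now apply (proj1 (proj2_sig q))).
    apply fle_antisym.
    + now apply Join_least; intro q; rewrite Hq; apply fmeet_glb; apply (le_Join _ q); lattice.
    + apply Join_meet_r; intro q; apply Join_meet_l; intro q'.
      apply (fle_trans (b := (D q ⊓ D q') ⊓ (val q U ⊓ val q' V))); [lattice |].
      apply (meet_le_Join_l (Ddir q q')); intro r.
      apply (le_Join _ r); rewrite Hq; apply fmeet_glb; [lattice | apply fmeet_glb].
      * eapply fle_trans; [| apply (sub_pt_elim q r)]; lattice.
      * eapply fle_trans; [| apply (sub_pt_elim q' r)]; lattice.
  - intros S W HW.
    assert (Hq : forall q : ptL e, val q W = fsup (fun l => exists U, S U /\ l = val q U))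
      by (intro q; now apply (proj1 (proj2 (proj2_sig q)))).
    apply fle_antisym.
    + apply Join_least; intro q; rewrite Hq; apply fsup_meet_l; intros s [U [HU ->]].
      eapply fle_trans; [apply (Join_ub (fun q => D q ⊓ val q U) q) |].
      now apply fsup_ub; exists U.
    + apply fsup_least; intros l [U [HU ->]]; apply Join_least; intro q; apply (le_Join _ q).
      now apply meet_mono; [apply fle_refl | rewrite Hq; apply fsup_ub; exists U].
  - intros lam W HW.
    assert (Hq : forall q : ptL e, val q W = lam)
      by (intro q; now apply (proj2 (proj2 (proj2_sig q)))).
    apply fle_antisym.
    + now apply Join_least; intro q; rewrite Hq; apply fmeet_r.
    + rewrite <- (fmeet_topl lam) at 1; rewrite <- Dne.
      now apply Join_meet_r; intro q; apply (le_Join _ q); rewrite Hq; apply fle_refl.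
Qed.

Lemma pt_sup_Lsup D (HD : Ldirected E D) : is_Lsup E D (exist _ _ (pt_sup_point HD)).
Proof.
  intro t; apply fle_antisym; apply Lsub_intro.
  - intro q; apply Lsub_intro; intro A.
    eapply fle_trans; [| apply sub_pt_elim]; apply fmeet_glb; [lattice |].
    simpl; unfold pt_sup; apply (le_Join _ q); lattice.
  - intro A; simpl; unfold pt_sup; apply Join_meet_l; intro q.
    eapply fle_trans; [| apply (sub_pt_elim q t)]; apply fmeet_glb; [| lattice].
    eapply fle_trans; [| apply (Lsub_elim D (down E t) q)]; lattice.
Qed.

Lemma ptL_Ldcpo : Ldcpo E.
Proof. split; [apply sub_pt_Lorder |]; intros D HD; eexists; apply (pt_sup_Lsup HD). Qed.

Lemma Lsup_pt_val D s A : Ldirected E D -> is_Lsup E D s -> val s A = pt_sup D A.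
Proof.
  intros HD Hs; now rewrite (Lsup_unique sub_pt_Lorder Hs (pt_sup_Lsup HD)).
Qed.

End PointsDcpo.

Section WayBelow.
Context {L : frame} {P : Type} (e : P -> P -> L) (Hc : continuous_Lordered e).
Local Notation W := (waybelow e).
Let He : is_Lorder e := proj1 Hc.

Lemma waybelow_elim {I s} x y : Lideal e I -> is_Lsup e I s -> W x y ⊓ e x s ⊑ I y.
Proof. intros HI Hs; apply fsup_meet_r; intros l Hl; now apply imp_elim, Hl. Qed.

Lemma waybelow_intro c x y :
  (forall I s, Lideal e I -> is_Lsup e I s -> c ⊓ e x s ⊑ I y) -> c ⊑ W x y.
Proof. intro H; apply fsup_ub; intros I s HI Hs; now apply imp_intro, H. Qed.

Lemma waybelow_directed x : Ldirected e (W x).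
Proof. apply (proj2 Hc x). Qed.

Lemma waybelow_Lsup x : is_Lsup e (W x) x.
Proof. apply (proj2 Hc x). Qed.

Lemma waybelow_nonempty x : ftop ⊑ Join (W x).
Proof. rewrite (proj1 (waybelow_directed x)); apply fle_refl. Qed.

Lemma waybelow_le x y : W x y ⊑ e y x.
Proof.
  apply (fle_trans (b := W x y ⊓ e x x)); [rewrite (Lrefl He); lattice |].
  exact (waybelow_elim x y (down_ideal He x) (down_Lsup He x)).
Qed.

Lemma waybelow_upper x x' y : W x y ⊓ e x x' ⊑ W x' y.
Proof.
  apply waybelow_intro; intros I s HI Hs.
  eapply fle_trans; [| exact (waybelow_elim x y HI Hs)]; apply fmeet_glb; [lattice |].
  apply (Ltrans He x'); lattice.
Qed.

Lemma waybelow_lower x y y' : W x y ⊓ e y' y ⊑ W x y'.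
Proof.
  apply waybelow_intro; intros I s HI Hs.
  eapply fle_trans; [| apply (proj2 HI y' y)]; apply fmeet_glb; [| lattice].
  eapply fle_trans; [| exact (waybelow_elim x y HI Hs)]; lattice.
Qed.

Definition waybelow_comp x y : L := Join (fun z => W x z ⊓ W z y).

Lemma waybelow_comp_ideal x : Lideal e (waybelow_comp x).
Proof.
  split; [split |].
  - apply top_le_eq; eapply fle_trans; [apply waybelow_nonempty |].
    apply Join_least; intro z; rewrite <- (fmeet_topr (W x z)).
    apply (meet_le_Join_r (waybelow_nonempty z)); intro y.
    apply (le_Join _ y); exact (Join_ub (fun z => W x z ⊓ W z y) z).
  - intros a b; unfold waybelow_comp; apply Join_meet_r; intro z; apply Join_meet_l; intro z'.
    apply (fle_trans (b := (W x z ⊓ W x z') ⊓ (W z a ⊓ W z' b))); [lattice |].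
    apply (meet_le_Join_l (proj2 (waybelow_directed x) z z')); intro w.
    apply (fle_trans (b := W x w ⊓ (W w a ⊓ W w b))).
    { apply fmeet_glb; [lattice | apply fmeet_glb].
      - eapply fle_trans; [| apply (waybelow_upper z w a)]; lattice.
      - eapply fle_trans; [| apply (waybelow_upper z' w b)]; lattice. }
    apply (meet_le_Join_r (proj2 (waybelow_directed w) a b)); intro c.
    apply (le_Join _ c); apply fmeet_glb; [apply fmeet_glb | lattice]; [| lattice].
    apply (le_Join _ w); lattice.
  - intros a b; unfold waybelow_comp; apply Join_meet_r; intro z; apply (le_Join _ z).
    apply fmeet_glb; [lattice |].
    eapply fle_trans; [| apply (waybelow_lower z b a)]; lattice.
Qed.

Lemma waybelow_comp_Lsup x : is_Lsup e (waybelow_comp x) x.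
Proof.
  intro t; apply fle_antisym.
  - apply Lsub_intro; intro y; unfold waybelow_comp; apply Join_meet_l; intro z; unfold down.
    apply (Ltrans He x); [| lattice]; apply (Ltrans He z).
    + eapply fle_trans; [| apply (waybelow_le z y)]; lattice.
    + eapply fle_trans; [| apply (waybelow_le x z)]; lattice.
  - apply (Lsup_least t _ (waybelow_Lsup x)); intro z.
    apply (Lsup_least t _ (waybelow_Lsup z)); intro y.
    eapply fle_trans; [| apply (Lsub_elim (waybelow_comp x) (down e t) y)].
    apply fmeet_glb; [lattice |]; apply (le_Join _ z); lattice.
Qed.

(* Interpolation: instantiate the definition of [W x y] with the ideal [waybelow_comp x]. *)
Lemma waybelow_interpolate x y : W x y ⊑ waybelow_comp x y.
Proof.
  apply (fle_trans (b := W x y ⊓ e x x)); [rewrite (Lrefl He); lattice |].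
  exact (waybelow_elim x y (waybelow_comp_ideal x) (waybelow_comp_Lsup x)).
Qed.

Definition lower_closure (D : P -> L) (y : P) : L := Join (fun x => D x ⊓ e y x).

Lemma lower_closure_ideal D : Ldirected e D -> Lideal e (lower_closure D).
Proof.
  intros [Dne Ddir]; split; [split |].
  - apply top_le_eq; rewrite <- Dne; apply Join_least; intro x.
    apply (le_Join _ x), (le_Join _ x); rewrite (Lrefl He); lattice.
  - intros a b; unfold lower_closure; apply Join_meet_r; intro x; apply Join_meet_l; intro x'.
    apply (fle_trans (b := (D x ⊓ D x') ⊓ (e a x ⊓ e b x'))); [lattice |].
    apply (meet_le_Join_l (Ddir x x')); intro z.
    apply (le_Join _ z); apply fmeet_glb; [apply fmeet_glb |].
    + apply (le_Join _ z); rewrite (Lrefl He); lattice.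
    + apply (Ltrans He x); lattice.
    + apply (Ltrans He x'); lattice.
  - intros a b; unfold lower_closure; apply Join_meet_r; intro x; apply (le_Join _ x).
    apply fmeet_glb; [lattice |]; apply (Ltrans He b); lattice.
Qed.

Lemma lower_closure_Lsup D s : is_Lsup e D s -> is_Lsup e (lower_closure D) s.
Proof.
  intros Hs t; apply fle_antisym.
  - apply Lsub_intro; intro z; unfold lower_closure; apply Join_meet_l; intro x; unfold down.
    apply (Ltrans He s); [| lattice]; apply (Ltrans He x); [lattice |].
    eapply fle_trans; [| apply (Lsup_ub He x Hs)]; lattice.
  - apply (Lsup_least t _ Hs); intro z.
    eapply fle_trans; [| apply (Lsub_elim (lower_closure D) (down e t) z)].
    apply fmeet_glb; [lattice |]; apply (le_Join _ z); rewrite (Lrefl He); lattice.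
Qed.

Lemma scott_open_waybelow y : scott_open e (fun x => W x y).
Proof.
  split; [intros x x'; apply waybelow_upper |].
  intros D s HD Hs; apply fle_antisym.
  - eapply fle_trans; [apply waybelow_interpolate |].
    apply Join_least; intro z.
    apply (fle_trans (b := lower_closure D z ⊓ W z y)).
    { apply fmeet_glb; [| lattice].
      apply (fle_trans (b := W s z ⊓ e s s)); [rewrite (Lrefl He); lattice |].
      exact (waybelow_elim s z (lower_closure_ideal HD) (lower_closure_Lsup Hs)). }
    unfold lower_closure at 1; apply Join_meet_r; intro x; apply (le_Join _ x).
    apply fmeet_glb; [| lattice].
    eapply fle_trans; [| apply (waybelow_upper z x y)]; lattice.
  - apply Join_least; intro x.
    eapply fle_trans; [| apply (waybelow_upper x s y)]; apply fmeet_glb; [lattice |].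
    eapply fle_trans; [| apply (Lsup_ub He x Hs)]; lattice.
Qed.

Definition way_up (y : P) : Opens e := exist _ _ (scott_open_waybelow y).

Lemma open_waybelow_decomp (A : Opens e) x : val A x = Join (fun y => val A y ⊓ W x y).
Proof. apply open_Lsup; [apply waybelow_directed | apply waybelow_Lsup]. Qed.

End WayBelow.

Section ContinuousPoints.
Context {L : frame} {P : Type} (e : P -> P -> L) (Hc : continuous_Lordered e).
Local Notation W := (waybelow e).
Local Notation E := (@sub_pt L P e).
Local Notation up := (way_up Hc).
Let He : is_Lorder e := proj1 Hc.
Let HE : is_Lorder E := sub_pt_Lorder e.

Lemma eta_mono y z : e y z ⊑ E (eta e y) (eta e z).
Proof. apply Lsub_intro; intro A; simpl; unfold evalpt; rewrite fmeetC; apply open_upper. Qed.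

Lemma pt_way_up_le (r : ptL e) y : val r (up y) ⊑ E (eta e y) r.
Proof.
  apply Lsub_intro; intro A; simpl; unfold evalpt.
  rewrite <- (pt_const r (val A y)), <- pt_meet; apply pt_mono; intro x; simpl.
  eapply fle_trans; [| apply (open_upper A y x)]; apply fmeet_glb; [lattice |].
  eapply fle_trans; [| apply (waybelow_le Hc x y)]; lattice.
Qed.

Lemma pt_way_up_nonempty (p : ptL e) : ftop ⊑ Join (fun y => val p (up y)).
Proof.
  rewrite <- pt_Join, <- (pt_const p ftop) at 1; apply pt_mono; intro x; simpl.
  apply (waybelow_nonempty Hc).
Qed.

Lemma pt_way_up_directed (p : ptL e) y1 y2 :
  val p (up y1) ⊓ val p (up y2) ⊑ Join (fun z => val p (up z) ⊓ (e y1 z ⊓ e y2 z)).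
Proof.
  rewrite <- pt_meet; apply pt_le_Join_weighted; intro x; simpl.
  eapply fle_trans; [apply (proj2 (waybelow_directed Hc x) y1 y2) |].
  apply Join_least; intro z; apply (le_Join _ z); lattice.
Qed.

Lemma pt_way_up_decomp (p : ptL e) (A : Opens e) :
  val p A ⊑ Join (fun y => val p (up y) ⊓ val A y).
Proof.
  apply pt_le_Join_weighted; intro x; simpl; rewrite (open_waybelow_decomp Hc A x).
  apply Join_least; intro y; apply (le_Join _ y); lattice.
Qed.

Definition pt_approx (p q : ptL e) : L := Join (fun y => val p (up y) ⊓ E q (eta e y)).

Lemma pt_approx_eta p y : val p (up y) ⊑ pt_approx p (eta e y).
Proof. apply (le_Join _ y); rewrite (Lrefl HE); lattice. Qed.

Lemma pt_approx_le p q : pt_approx p q ⊑ E q p.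
Proof.
  apply Join_least; intro y; apply (Ltrans HE (eta e y)); [lattice |].
  eapply fle_trans; [| apply pt_way_up_le]; lattice.
Qed.

Lemma pt_approx_ideal p : Lideal E (pt_approx p).
Proof.
  split; [split |].
  - apply top_le_eq; eapply fle_trans; [apply pt_way_up_nonempty |].
    apply Join_least; intro y; apply (le_Join _ (eta e y)), pt_approx_eta.
  - intros q1 q2; unfold pt_approx at 1 2.
    apply Join_meet_r; intro y1; apply Join_meet_l; intro y2.
    apply (fle_trans
      (b := (val p (up y1) ⊓ val p (up y2)) ⊓ (E q1 (eta e y1) ⊓ E q2 (eta e y2))));
      [lattice |].
    apply (meet_le_Join_l (pt_way_up_directed p y1 y2)); intro z.
    apply (le_Join _ (eta e z)); apply fmeet_glb; [apply fmeet_glb |].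
    + eapply fle_trans; [| apply pt_approx_eta]; lattice.
    + apply (Ltrans HE (eta e y1)); [lattice |].
      eapply fle_trans; [| apply eta_mono]; lattice.
    + apply (Ltrans HE (eta e y2)); [lattice |].
      eapply fle_trans; [| apply eta_mono]; lattice.
  - intros q' q; unfold pt_approx; apply Join_meet_r; intro y; apply (le_Join _ y).
    apply fmeet_glb; [lattice |]; apply (Ltrans HE q); lattice.
Qed.

Lemma pt_approx_Lsup p : is_Lsup E (pt_approx p) p.
Proof.
  intro t; apply fle_antisym; apply Lsub_intro.
  - intro q; unfold down; apply (Ltrans HE p); [| lattice].
    eapply fle_trans; [| apply (pt_approx_le p q)]; lattice.
  - intro A; apply (meet_le_Join_r (pt_way_up_decomp p A)); intro y.
    eapply fle_trans; [| apply (sub_pt_elim (eta e y) t A)].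
    apply fmeet_glb; [| simpl; unfold evalpt; lattice].
    eapply fle_trans; [| apply (Lsub_elim (pt_approx p) (down E t) (eta e y))].
    apply fmeet_glb; [lattice |]; eapply fle_trans; [| apply pt_approx_eta]; lattice.
Qed.

Lemma pt_approx_waybelow p : pt_approx p = waybelow E p.
Proof.
  apply functional_extensionality; intro q; apply fle_antisym.
  - apply fsup_ub; intros I s HI Hs; apply imp_intro.
    unfold pt_approx; apply Join_meet_r; intro y.
    apply (fle_trans (b := val s (up y) ⊓ E q (eta e y))).
    { apply fmeet_glb; [| lattice].
      eapply fle_trans; [| apply (sub_pt_elim p s)]; lattice. }
    rewrite (Lsup_pt_val (up y) (proj1 HI) Hs); apply Join_meet_r; intro r.
    eapply fle_trans; [| apply (proj2 HI q r)]; apply fmeet_glb; [lattice |].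
    apply (Ltrans HE (eta e y)); [lattice |].
    eapply fle_trans; [| apply pt_way_up_le]; lattice.
  - apply fsup_least; intros l Hl.
    apply (fle_trans (b := l ⊓ E p p)); [rewrite (Lrefl HE); lattice |].
    apply imp_elim, Hl; [apply pt_approx_ideal | apply pt_approx_Lsup].
Qed.

Lemma ptL_continuous : continuous_Ldcpo E.
Proof.
  split; [split; [exact HE |] | apply ptL_Ldcpo].
  intro p; rewrite <- pt_approx_waybelow.
  split; [apply pt_approx_ideal | apply pt_approx_Lsup].
Qed.

Lemma eta_scott_continuous : scott_continuous e E (eta e).
Proof.
  intros D x HD Hx t; unfold down; rewrite Lsub_Limage; apply fle_antisym; apply Lsub_intro.
  - intro y; apply Lsub_intro; intro A; simpl; unfold evalpt.
    eapply fle_trans; [| apply (sub_pt_elim (eta e x) t A)].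
    apply fmeet_glb; [lattice |]; simpl; unfold evalpt.
    eapply fle_trans; [| apply (open_upper A y x)]; apply fmeet_glb; [lattice |].
    eapply fle_trans; [| apply (Lsup_ub He y Hx)]; lattice.
  - intro A; simpl; unfold evalpt; rewrite (open_Lsup A HD Hx).
    apply Join_meet_l; intro y.
    eapply fle_trans; [| apply (sub_pt_elim (eta e y) t A)].
    apply fmeet_glb; [| simpl; unfold evalpt; lattice].
    eapply fle_trans; [| apply (Lsub_elim D (fun y => E (eta e y) t) y)]; lattice.
Qed.

End ContinuousPoints.

Section Extension.
Context {L : frame} {P : Type} (e : P -> P -> L) (Hc : continuous_Lordered e).
Context {M : Type} (eM : M -> M -> L) (HM : continuous_Ldcpo eM).
Context (f : P -> M) (Hf : scott_continuous e eM f).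
Local Notation E := (@sub_pt L P e).
Local Notation up := (way_up Hc).
Let He : is_Lorder e := proj1 Hc.
Let HE : is_Lorder E := sub_pt_Lorder e.
Let HeM : is_Lorder eM := proj1 (proj1 HM).

Definition ext_approx (p : ptL e) : M -> L := Limage f (fun y => val p (up y)).

Lemma ext_approx_directed p : Ldirected eM (ext_approx p).
Proof.
  split.
  - apply top_le_eq; eapply fle_trans; [apply (pt_way_up_nonempty Hc) |].
    now apply Join_least; intro y; apply (le_Join _ (f y)), fsup_ub; exists y.
  - intros m1 m2; unfold ext_approx, Limage at 1 2.
    apply fsup_meet_r; intros s1 [y1 [<- ->]]; apply fsup_meet_l; intros s2 [y2 [<- ->]].
    eapply fle_trans; [apply (pt_way_up_directed Hc) |].
    apply Join_least; intro z; apply (le_Join _ (f z)); apply fmeet_glb; [apply fmeet_glb |].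
    + now eapply fle_trans; [apply fmeet_l | apply fsup_ub; exists z].
    + eapply fle_trans; [| apply (scott_continuous_mono He HeM Hf)]; lattice.
    + eapply fle_trans; [| apply (scott_continuous_mono He HeM Hf)]; lattice.
Qed.

Definition ext (p : ptL e) : M :=
  proj1_sig (constructive_indefinite_description _ (proj2 (proj2 HM) _ (ext_approx_directed p))).

Lemma ext_Lsup p : is_Lsup eM (ext_approx p) (ext p).
Proof. unfold ext; now destruct constructive_indefinite_description. Qed.

Lemma ext_le p m : eM (ext p) m = Lsub (fun y => val p (up y)) (fun y => eM (f y) m).
Proof. rewrite (ext_Lsup p m); apply Lsub_Limage. Qed.

Lemma ext_eta x : ext (eta e x) = f x.
Proof.
  apply (Lsup_unique HeM (ext_Lsup (eta e x))).
  exact (Hf (waybelow_directed Hc x) (waybelow_Lsup Hc x)).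
Qed.

Lemma ext_scott_continuous : scott_continuous E eM ext.
Proof.
  intros D s HD Hs m; unfold down; rewrite Lsub_Limage, ext_le; apply fle_antisym;
    apply Lsub_intro.
  - intro q; rewrite ext_le; apply Lsub_intro; intro y.
    eapply fle_trans; [| apply (Lsub_elim (fun y => val s (up y)) (fun y => eM (f y) m) y)].
    apply fmeet_glb; [lattice |]; rewrite (Lsup_pt_val (up y) HD Hs).
    apply (le_Join _ q); lattice.
  - intro y; rewrite (Lsup_pt_val (up y) HD Hs); apply Join_meet_l; intro q.
    apply (fle_trans (b := eM (ext q) m ⊓ val q (up y))).
    + apply fmeet_glb; [| lattice].
      eapply fle_trans; [| apply (Lsub_elim D (fun q => eM (ext q) m) q)]; lattice.
    + rewrite ext_le; apply (Lsub_elim (fun y => val q (up y)) (fun y => eM (f y) m) y).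
Qed.

(* [g p] is the supremum of [g] over the ideal [pt_approx p], which is generated by the
   points [eta e y], where [g] agrees with [f]. *)
Lemma ext_unique (g : ptL e -> M) :
  scott_continuous E eM g -> (forall x, g (eta e x) = f x) -> g = ext.
Proof.
  intros Hg Hgf; apply functional_extensionality; intro p.
  apply (Lsup_unique HeM (D := ext_approx p)); [| apply ext_Lsup].
  intro m; rewrite (Hg _ _ (proj1 (pt_approx_ideal Hc p)) (pt_approx_Lsup Hc p) m).
  unfold down, ext_approx; rewrite !Lsub_Limage; apply fle_antisym; apply Lsub_intro.
  - intro y; rewrite <- Hgf.
    eapply fle_trans; [| apply (Lsub_elim (pt_approx Hc p) (fun q => eM (g q) m) (eta e y))].
    apply fmeet_glb; [lattice |]; eapply fle_trans; [| apply pt_approx_eta]; lattice.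
  - intro q; unfold pt_approx; apply Join_meet_l; intro y; apply (Ltrans HeM (g (eta e y))).
    + eapply fle_trans; [| apply (scott_continuous_mono HE HeM Hg)]; lattice.
    + rewrite Hgf; eapply fle_trans;
        [| apply (Lsub_elim (fun y => val p (up y)) (fun y => eM (f y) m) y)]; lattice.
Qed.

End Extension.

Theorem theorem6p5 (L : frame) (P : Type) (e : P -> P -> L) :
  continuous_Lordered e ->
  directed_completion e (@sub_pt L P e) (@eta L P e).
Proof.
  intro Hc; split; [exact (ptL_continuous Hc) | split; [exact (eta_scott_continuous Hc) |]].
  intros M eM HM f Hf; exists (ext Hc HM Hf); split.
  - split; [apply ext_scott_continuous | apply ext_eta].
  - intros g [Hg Hgf]; symmetry; now apply ext_unique.
Qed.
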